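(* Let $(G,M,\Delta)$ be a Garside structure, $\mathcal S=\mathrm{Div}(\Delta)\setminus\{1\}$ and $\lg$ the word length on $G$ with respect to $\mathcal S$. Let $\alpha\in G$ and let $\alpha=\Delta^p a$ be its left $\Delta$-form. Then: (1) if $p\ge0$, $\lg(\alpha)=\lg(a)+p$; (2) if $p\le-\lg(a)$, $\lg(\alpha)=-p$; (3) if $-\lg(a)\le p\le0$, $\lg(\alpha)=\lg(a)$. In summary, $\lg(\alpha)=\max(\lg(a)+p,\,-p,\,\lg(a))$.
   Context: Let $G$ be a group and $M$ a submonoid with $M\cap M^{-1}=\{1\}$. Define $\alpha\le_L\beta$ iff $\alpha^{-1}\beta\in M$, and $\alpha\le_R\beta$ iff $\beta\alpha^{-1}\in M$. For $a\in M$ let $\mathrm{Div}_L(a)=\{b\in M: b\le_L a\}$, $\mathrm{Div}_R(a)=\{b\in M: b\le_R a\}$; $a$ is balanced if these coincide, and then $\mathrm{Div}(a)$ denotes this set. $M$ is Noetherian if each $a\in M$ admits an $n$ such that $a$ is not a product of more than $n$ non-trivial factors. A Garside structure $(G,M,\Delta)$: $\Delta\in M$ balanced, $M$ Noetherian, $\mathrm{Div}(\Delta)$ finite and generating $M$ as a monoid and $G$ as a group, $(G,\le_L)$ a lattice. An element $a\in M$ is unmovable if $\Delta\not\le_L a$. Every $\alpha\in G$ can be written uniquely as $\alpha=\Delta^p a$ with $p\in\mathbb Z$ and $a\in M$ unmovable; this is its left $\Delta$-form. *)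

From Stdlib Require Import ZArith List Lia ClassicalEpsilon.
Import ListNotations.
Open Scope Z_scope.

Record Group := MkGroup {
  carrier :> Type;
  gmul : carrier -> carrier -> carrier;
  gone : carrier;
  ginv : carrier -> carrier;
  gmulA : forall x y z, gmul x (gmul y z) = gmul (gmul x y) z;
  gmul1l : forall x, gmul gone x = x;
  gmulVl : forall x, gmul (ginv x) x = gone
}.

Arguments gmul {g}.
Arguments gone {g}.
Arguments ginv {g}.

Section Garside.
Variable G : Group.

Definition gprod (l : list G) : G := fold_right gmul gone l.

Definition zpow (x : G) (p : Z) : G :=
  match p with
  | Z0 => gone
  | Zpos n => gprod (repeat x (Pos.to_nat n))
  | Zneg n => gprod (repeat (ginv x) (Pos.to_nat n))
  end.

Definition submonoid (M : G -> Prop) : Prop :=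
  M gone /\ (forall x y, M x -> M y -> M (gmul x y)).

Definition pointed (M : G -> Prop) : Prop :=
  forall x, M x -> M (ginv x) -> x = gone.

Definition le_L (M : G -> Prop) (x y : G) : Prop := M (gmul (ginv x) y).
Definition le_R (M : G -> Prop) (x y : G) : Prop := M (gmul y (ginv x)).

Definition Div_L (M : G -> Prop) (a b : G) : Prop := M b /\ le_L M b a.
Definition Div_R (M : G -> Prop) (a b : G) : Prop := M b /\ le_R M b a.

Definition balanced (M : G -> Prop) (a : G) : Prop :=
  M a /\ forall b, Div_L M a b <-> Div_R M a b.

(* for balanced a, Div(a) *)
Definition Div (M : G -> Prop) (a : G) : G -> Prop := Div_L M a.

Definition noetherian (M : G -> Prop) : Prop :=
  forall a, M a -> exists n : nat, forall l : list G,
    (forall x, In x l -> M x /\ x <> gone) -> gprod l = a -> (length l <= n)%nat.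

Definition finite_set (P : G -> Prop) : Prop :=
  exists l : list G, forall x, P x -> In x l.

Definition generates_monoid (P : G -> Prop) (M : G -> Prop) : Prop :=
  forall a, M a <-> exists l : list G, (forall x, In x l -> P x) /\ gprod l = a.

Definition generates_group (P : G -> Prop) : Prop :=
  forall a : G, exists l : list G,
    (forall x, In x l -> P x \/ P (ginv x)) /\ gprod l = a.

Definition is_lattice (le : G -> G -> Prop) : Prop :=
  forall x y,
    (exists m, le m x /\ le m y /\ forall z, le z x -> le z y -> le z m) /\
    (exists j, le x j /\ le y j /\ forall z, le x z -> le y z -> le j z).

Definition garside_structure (M : G -> Prop) (Delta : G) : Prop :=
  submonoid M /\ pointed M /\
  balanced M Delta /\
  noetherian M /\
  finite_set (Div M Delta) /\
  generates_monoid (Div M Delta) M /\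
  generates_group (Div M Delta) /\
  is_lattice (le_L M).

Definition unmovable (M : G -> Prop) (Delta a : G) : Prop :=
  M a /\ ~ le_L M Delta a.

Definition gensS (M : G -> Prop) (Delta : G) (x : G) : Prop :=
  Div M Delta x /\ x <> gone.

Definition is_word (S : G -> Prop) (l : list G) : Prop :=
  forall x, In x l -> S x \/ S (ginv x).

Definition is_word_length (S : G -> Prop) (x : G) (n : nat) : Prop :=
  (exists l, is_word S l /\ gprod l = x /\ length l = n) /\
  (forall l, is_word S l -> gprod l = x -> (n <= length l)%nat).

(* word length with respect to S (a chosen witness; unique when it exists) *)
Definition word_length (S : G -> Prop) (x : G) : nat :=
  epsilon (inhabits 0%nat) (fun n => is_word_length S x n).

End Garside.

Arguments zpow {G}.
Arguments le_L {G}.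
Arguments garside_structure {G}.
Arguments unmovable {G}.
Arguments gensS {G}.
Arguments word_length {G}.

From Stdlib Require Import ZArith List Lia Classical ClassicalEpsilon Wf_nat.
Import ListNotations.
Open Scope Z_scope.

(** Let R be the least number of elements of Div(Delta) ("simples") with product a;
    the formula for p = 0 shows R = lg(a).

    Upper bound: for p >= 0 write Delta^p followed by the R simples of a; for p <= -R
    write Delta^(p+R) followed by Delta^-R a; for -R <= p <= 0 multiply Delta^p into the
    first -p simples of a. Since conjugation by Delta permutes the simples, Delta^-k times
    a product of k simples is a product of k inverses of simples, so these words have the
    required lengths.

    Lower bound: pushing every Delta^-1 to the left by conjugation, a word of length n in
    the simples and their inverses evaluates to Delta^-j m with j <= n and m a product of n
    simples. Hence a = Delta^-(p+j) m, and p + j >= 0 because a is unmovable. Left division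
    by a simple t of a product s x of N simples stays a product of N simples: with v the
    <=_L-join of t and s, both t^-1 v and s^-1 v are simple and induction applies to
    (s^-1 v)^-1 x. Dividing by Delta therefore removes one factor, so a is a product of
    n - p - j simples and n >= max(R + p, -p, R). *)

Section GroupTheory.
Variable G : Group.
Implicit Types x y g : G.

Lemma gmulVr x : gmul x (ginv x) = gone.
Proof.
  transitivity (gmul (gmul (ginv (ginv x)) (ginv x)) (gmul x (ginv x))).
  - rewrite gmulVl, gmul1l. reflexivity.
  - rewrite <- gmulA, (gmulA _ (ginv x) x), gmulVl, gmul1l, gmulVl. reflexivity.
Qed.

Lemma gmul1r x : gmul x gone = x.
Proof. rewrite <- (gmulVl G x), gmulA, gmulVr, gmul1l. reflexivity. Qed.

Lemma gmulKl x y : gmul (ginv x) (gmul x y) = y.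
Proof. rewrite gmulA, gmulVl, gmul1l. reflexivity. Qed.

Lemma gmulKr x y : gmul x (gmul (ginv x) y) = y.
Proof. rewrite gmulA, gmulVr, gmul1l. reflexivity. Qed.

Lemma ginv_uniq x y : gmul x y = gone -> ginv x = y.
Proof. intros H. rewrite <- (gmulKl x y), H, gmul1r. reflexivity. Qed.

Lemma ginvK x : ginv (ginv x) = x.
Proof. apply ginv_uniq, gmulVl. Qed.

Lemma ginv1 : ginv (@gone G) = gone.
Proof. apply ginv_uniq, gmul1l. Qed.

Lemma ginvM x y : ginv (gmul x y) = gmul (ginv y) (ginv x).
Proof.
  apply ginv_uniq. rewrite <- gmulA, (gmulA _ y), gmulVr, gmul1l, gmulVr. reflexivity.
Qed.

Lemma gprod_app (l1 l2 : list G) : gprod G (l1 ++ l2) = gmul (gprod G l1) (gprod G l2).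
Proof.
  induction l1 as [|x l1 IH]; simpl.
  - rewrite gmul1l. reflexivity.
  - rewrite IH, gmulA. reflexivity.
Qed.

Lemma gprod_repeat_succ (x : G) n : gprod G (repeat x (S n)) = gmul (gprod G (repeat x n)) x.
Proof.
  change (repeat x (S n)) with (x :: repeat x n).
  rewrite repeat_cons, gprod_app. simpl. rewrite gmul1r. reflexivity.
Qed.

Definition gconj g x : G := gmul (ginv g) (gmul x g).

End GroupTheory.

Arguments gconj {G}.

Ltac gsimpl :=
  unfold gconj;
  repeat (rewrite ?gmul1l, ?gmul1r, ?ginvK, ?ginv1, ?ginvM, ?gmulVl, ?gmulVr,
            ?gmulKl, ?gmulKr, <- ?gmulA).

Section Powers.
Variables (G : Group) (D : G).

Lemma zpow_nat n : zpow D (Z.of_nat n) = gprod G (repeat D n).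
Proof. destruct n; simpl; [reflexivity|]. rewrite SuccNat2Pos.id_succ. reflexivity. Qed.

Lemma zpow_opp_nat n : zpow D (- Z.of_nat n) = gprod G (repeat (ginv D) n).
Proof. destruct n; simpl; [reflexivity|]. rewrite SuccNat2Pos.id_succ. reflexivity. Qed.

Lemma zpow_succ z : zpow D (z + 1) = gmul (zpow D z) D.
Proof.
  destruct (Z_le_gt_dec 0 z).
  - replace z with (Z.of_nat (Z.to_nat z)) by lia.
    replace (Z.of_nat (Z.to_nat z) + 1) with (Z.of_nat (S (Z.to_nat z))) by lia.
    rewrite !zpow_nat, gprod_repeat_succ. reflexivity.
  - replace z with (- Z.of_nat (S (Z.to_nat (- z - 1)))) by lia.
    replace (- Z.of_nat (S (Z.to_nat (- z - 1))) + 1) with (- Z.of_nat (Z.to_nat (- z - 1))) by lia.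
    rewrite !zpow_opp_nat, gprod_repeat_succ. gsimpl. reflexivity.
Qed.

Lemma zpow_pred z : zpow D (z - 1) = gmul (zpow D z) (ginv D).
Proof. rewrite <- (Z.sub_add 1 z) at 2. rewrite zpow_succ. gsimpl. reflexivity. Qed.

Lemma zpow_add z1 z2 : zpow D (z1 + z2) = gmul (zpow D z1) (zpow D z2).
Proof.
  induction z2 as [|z2 IH|z2 IH] using Z.peano_ind.
  - rewrite Z.add_0_r. simpl. rewrite gmul1r. reflexivity.
  - rewrite <- Z.add_1_r, Z.add_assoc, !zpow_succ, IH, gmulA. reflexivity.
  - rewrite <- Z.sub_1_r, Z.add_sub_assoc, !zpow_pred, IH, gmulA. reflexivity.
Qed.

Lemma zpow_opp z : zpow D (- z) = ginv (zpow D z).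
Proof. symmetry. apply ginv_uniq. rewrite <- zpow_add, Z.add_opp_diag_r. reflexivity. Qed.

Lemma zpow_m1 : zpow D (-1) = ginv D.
Proof. simpl. apply gmul1r. Qed.

Lemma zpow_opp_succr n :
  zpow D (- Z.of_nat (S n)) = gmul (zpow D (- Z.of_nat n)) (ginv D).
Proof. rewrite <- zpow_m1, <- zpow_add. f_equal. lia. Qed.

Lemma zpow_opp_succl n :
  zpow D (- Z.of_nat (S n)) = gmul (ginv D) (zpow D (- Z.of_nat n)).
Proof. rewrite <- zpow_m1, <- zpow_add. f_equal. lia. Qed.

End Powers.

Section Products.
Variable G : Group.
Implicit Types (P Q : G -> Prop) (x y g : G).

Definition nprod P (n : nat) x : Prop :=
  exists l, length l = n /\ (forall y, In y l -> P y) /\ gprod G l = x.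

Lemma nprod0 P : nprod P 0 gone.
Proof. exists []. repeat split. intros y []. Qed.

Lemma nprod0E P x : nprod P 0 x -> x = gone.
Proof. intros ([|] & Hl & _ & <-); [reflexivity|discriminate]. Qed.

Lemma nprod1 P y : P y -> nprod P 1 y.
Proof. exists [y]. simpl. rewrite gmul1r. intuition congruence. Qed.

Lemma nprod1E P y : nprod P 1 y -> P y.
Proof.
  intros ([|z [|]] & Hl & HP & <-); try discriminate.
  simpl. rewrite gmul1r. apply HP. left. reflexivity.
Qed.

Lemma nprod_mul P m n x y : nprod P m x -> nprod P n y -> nprod P (m + n) (gmul x y).
Proof.
  intros (l1 & <- & H1 & <-) (l2 & <- & H2 & <-).
  exists (l1 ++ l2). rewrite length_app, gprod_app. repeat split.
  intros z Hz. apply in_app_or in Hz. destruct Hz; auto.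
Qed.

Lemma nprod_split P k n x : (k <= n)%nat -> nprod P n x ->
  exists x1 x2, nprod P k x1 /\ nprod P (n - k) x2 /\ x = gmul x1 x2.
Proof.
  intros Hk (l & <- & Hl & <-).
  exists (gprod G (firstn k l)), (gprod G (skipn k l)).
  rewrite <- gprod_app, firstn_skipn. split; [|split; [|reflexivity]].
  - exists (firstn k l). rewrite firstn_length_le by exact Hk.
    repeat split. intros y Hy. apply Hl. rewrite <- (firstn_skipn k l). apply in_or_app. auto.
  - exists (skipn k l). rewrite length_skipn.
    repeat split. intros y Hy. apply Hl. rewrite <- (firstn_skipn k l). apply in_or_app. auto.
Qed.

Lemma nprod_consE P n x : nprod P (S n) x ->
  exists y x', P y /\ nprod P n x' /\ x = gmul y x'.
Proof.
  intros Hx. destruct (nprod_split P 1 _ _ (le_n_S _ _ (Nat.le_0_l n)) Hx)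
    as (y & x' & Hy & Hx' & ->).
  rewrite Nat.sub_1_r in Hx'.
  exists y, x'. exact (conj (nprod1E _ _ Hy) (conj Hx' eq_refl)).
Qed.

Lemma nprod_rconsE P n x : nprod P (S n) x ->
  exists x' y, nprod P n x' /\ P y /\ x = gmul x' y.
Proof.
  intros Hx. destruct (nprod_split P n _ _ (Nat.le_succ_diag_r n) Hx)
    as (x' & y & Hx' & Hy & ->).
  rewrite Nat.sub_succ_l, Nat.sub_diag in Hy by reflexivity.
  exists x', y. exact (conj Hx' (conj (nprod1E _ _ Hy) eq_refl)).
Qed.

Lemma nprod_weaken P Q n x : (forall y, P y -> Q y) -> nprod P n x -> nprod Q n x.
Proof. intros HPQ (l & Hn & Hl & Hx). exists l. auto. Qed.

Lemma nprod_conj P Q g n x : (forall y, P y -> Q (gconj g y)) ->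
  nprod P n x -> nprod Q n (gconj g x).
Proof.
  intros HPQ. revert x. induction n as [|n IH]; intros x Hx.
  - rewrite (nprod0E _ _ Hx). replace (gconj g gone) with (@gone G) by (gsimpl; reflexivity).
    apply nprod0.
  - destruct (nprod_rconsE _ _ _ Hx) as (x' & y & Hx' & Hy & ->).
    replace (gconj g (gmul x' y)) with (gmul (gconj g x') (gconj g y)) by (gsimpl; reflexivity).
    rewrite <- Nat.add_1_r. apply nprod_mul; auto using nprod1.
Qed.

Lemma nprod_repeat P y n : P y -> nprod P n (gprod G (repeat y n)).
Proof.
  intros Hy. exists (repeat y n). rewrite repeat_length. repeat split.
  intros z Hz. apply repeat_spec in Hz. subst. exact Hy.
Qed.

End Products.

Lemma word_length_eq (G : Group) (S : G -> Prop) x n :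
  is_word_length G S x n -> word_length S x = n.
Proof.
  intros Hn. unfold word_length.
  pose proof (epsilon_spec (inhabits 0%nat) (fun k => is_word_length G S x k)
    (ex_intro _ n Hn)) as He.
  set (e := epsilon _ _) in *.
  destruct He as [(l & Hl & Hlx & Hlen) Hmin].
  destruct Hn as [(l' & Hl' & Hl'x & Hl'len) Hmin'].
  specialize (Hmin l' Hl' Hl'x). specialize (Hmin' l Hl Hlx). lia.
Qed.

Section Garside.
Variables (G : Group) (M : G -> Prop) (D : G).
Hypothesis M1 : M gone.
Hypothesis Mmul : forall x y, M x -> M y -> M (gmul x y).
Hypothesis M_pointed : pointed G M.
Hypothesis D_balanced : balanced G M D.
Hypothesis L_lattice : is_lattice G (le_L M).

Local Notation simple := (Div G M D).

Definition signed_simple (y : G) : Prop := simple y \/ simple (ginv y).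

Lemma MD : M D.
Proof. exact (proj1 D_balanced). Qed.

Lemma simpleD : simple D.
Proof. split; [exact MD|]. unfold le_L. rewrite gmulVl. exact M1. Qed.

Lemma simple_M s : simple s -> M s.
Proof. intros [Hs _]. exact Hs. Qed.

Lemma simple_rdiv s : simple s -> M (gmul D (ginv s)).
Proof. intros Hs. apply (proj2 D_balanced) in Hs as [_ Hs]. exact Hs. Qed.

Lemma simple_conjD_M s : simple s -> M (gconj D s).
Proof.
  intros [Hs Hsl].
  assert (Hu : Div_R G M D (gmul (ginv s) D)).
  { split; [exact Hsl|]. unfold le_R. gsimpl. exact Hs. }
  apply (proj2 D_balanced) in Hu as [_ Hu]. revert Hu. unfold le_L. gsimpl. auto.
Qed.

Lemma simple_conjVD_M s : simple s -> M (gconj (ginv D) s).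
Proof.
  intros Hs.
  assert (Hu : Div_L G M D (gmul D (ginv s))).
  { split; [exact (simple_rdiv s Hs)|]. unfold le_L. gsimpl. exact (simple_M s Hs). }
  apply (proj2 D_balanced) in Hu as [_ Hu]. revert Hu. unfold le_R. gsimpl. auto.
Qed.

Lemma simple_ldual s : simple s -> simple (gmul (ginv s) D).
Proof.
  intros Hs. split; [exact (proj2 Hs)|].
  pose proof (simple_conjD_M s Hs) as H. revert H. unfold le_L. gsimpl. auto.
Qed.

Lemma simple_rdual s : simple s -> simple (gmul D (ginv s)).
Proof.
  intros Hs. split; [exact (simple_rdiv s Hs)|].
  unfold le_L. gsimpl. exact (simple_M s Hs).
Qed.

Lemma simple_conjD s : simple s -> simple (gconj D s).
Proof.
  intros Hs. split; [exact (simple_conjD_M s Hs)|].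
  pose proof (simple_conjD_M _ (simple_ldual s Hs)) as H. revert H. unfold le_L. gsimpl. auto.
Qed.

Lemma simple_conjVD s : simple s -> simple (gconj (ginv D) s).
Proof.
  intros Hs. split; [exact (simple_conjVD_M s Hs)|].
  pose proof (simple_rdiv s Hs) as H. revert H. unfold le_L. gsimpl. auto.
Qed.

Lemma simple_ldiv s v : simple s -> simple v -> le_L M s v -> simple (gmul (ginv s) v).
Proof.
  intros Hs [_ Hv] Hsv. split; [exact Hsv|]. unfold le_L in *.
  replace (gmul (ginv (gmul (ginv s) v)) D) with (gmul (gmul (ginv v) D) (gconj D s))
    by (gsimpl; reflexivity).
  exact (Mmul _ _ Hv (simple_conjD_M s Hs)).
Qed.

Lemma nprod_simple_M n x : nprod G simple n x -> M x.
Proof.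
  intros (l & _ & Hl & <-). induction l as [|s l IH]; simpl; [exact M1|].
  apply Mmul; [apply simple_M, Hl; left; reflexivity|].
  apply IH. intros y Hy. apply Hl. right. exact Hy.
Qed.

Lemma zpow_nat_M n : M (zpow D (Z.of_nat n)).
Proof. rewrite zpow_nat. exact (nprod_simple_M _ _ (nprod_repeat G _ _ n simpleD)). Qed.

Lemma nprod_simple_ldiv n : forall m t, nprod G simple n m -> simple t -> le_L M t m ->
  nprod G simple n (gmul (ginv t) m).
Proof.
  induction n as [|n IH]; intros m t Hm Ht Htm.
  - rewrite (nprod0E _ _ _ Hm) in *. unfold le_L in Htm. rewrite gmul1r in Htm.
    rewrite (M_pointed t (simple_M t Ht) Htm). gsimpl. apply nprod0.
  - destruct (nprod_consE _ _ _ _ Hm) as (s & x & Hs & Hx & ->).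
    (* [v] is the join of [t] and [s] for [<=_L]; it lies below both [D] and [s x]. *)
    destruct (L_lattice t s) as [_ (v & Htv & Hsv & Hv_least)].
    assert (HvD : le_L M v D) by exact (Hv_least D (proj2 Ht) (proj2 Hs)).
    assert (Hv : simple v).
    { split; [|exact HvD]. replace v with (gmul t (gmul (ginv t) v)) by (gsimpl; reflexivity).
      exact (Mmul _ _ (simple_M t Ht) Htv). }
    assert (Hvm : le_L M v (gmul s x)).
    { apply Hv_least; [exact Htm|]. unfold le_L. gsimpl. exact (nprod_simple_M _ _ Hx). }
    assert (Hrest : nprod G simple n (gmul (ginv v) (gmul s x))).
    { replace (gmul (ginv v) (gmul s x)) with (gmul (ginv (gmul (ginv s) v)) x)
        by (gsimpl; reflexivity).
      apply IH; [exact Hx|exact (simple_ldiv s v Hs Hv Hsv)|].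
      revert Hvm. unfold le_L. gsimpl. auto. }
    replace (gmul (ginv t) (gmul s x))
      with (gmul (gmul (ginv t) v) (gmul (ginv v) (gmul s x))) by (gsimpl; reflexivity).
    apply (nprod_mul _ _ 1); [apply nprod1, simple_ldiv|]; assumption.
Qed.

Lemma nprod_simple_ldivD n m : D <> gone -> nprod G simple n m -> le_L M D m ->
  exists n', n = S n' /\ nprod G simple n' (gmul (ginv D) m).
Proof.
  intros HD Hm HDm. destruct n as [|n].
  - exfalso. apply HD. rewrite (nprod0E _ _ _ Hm) in HDm. unfold le_L in HDm.
    rewrite gmul1r in HDm. exact (M_pointed D MD HDm).
  - exists n. split; [reflexivity|].
    destruct (nprod_consE _ _ _ _ Hm) as (s & x & Hs & Hx & ->).
    replace (gmul (ginv D) (gmul s x)) with (gmul (ginv (gmul (ginv s) D)) x)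
      by (gsimpl; reflexivity).
    apply nprod_simple_ldiv; [exact Hx|exact (simple_ldual s Hs)|].
    revert HDm. unfold le_L. gsimpl. auto.
Qed.

Lemma nprod_simple_ldiv_zpow E : D <> gone -> forall n m, nprod G simple n m ->
  M (gmul (zpow D (- Z.of_nat E)) m) ->
  (E <= n)%nat /\ nprod G simple (n - E) (gmul (zpow D (- Z.of_nat E)) m).
Proof.
  intros HD. induction E as [|E IH]; intros n m Hm HEm.
  - simpl. rewrite gmul1l, Nat.sub_0_r. split; [lia|exact Hm].
  - rewrite zpow_opp_succr, <- gmulA in *.
    assert (HDm : le_L M D m).
    { unfold le_L.
      replace (gmul (ginv D) m)
        with (gmul (zpow D (Z.of_nat E)) (gmul (zpow D (- Z.of_nat E)) (gmul (ginv D) m)))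
        by (rewrite zpow_opp; gsimpl; reflexivity).
      exact (Mmul _ _ (zpow_nat_M E) HEm). }
    destruct (nprod_simple_ldivD n m HD Hm HDm) as (n' & -> & Hm').
    destruct (IH n' _ Hm' HEm) as [HE Hrest]. split; [lia|exact Hrest].
Qed.

Lemma nprod_signed_normal n x : nprod G signed_simple n x ->
  exists j m, (j <= n)%nat /\ nprod G simple n m /\ x = gmul (zpow D (- Z.of_nat j)) m.
Proof.
  revert x. induction n as [|n IH]; intros x Hx.
  - exists 0%nat, gone. rewrite (nprod0E _ _ _ Hx). simpl. rewrite gmul1l.
    repeat split; [lia|apply nprod0].
  - destruct (nprod_rconsE _ _ _ _ Hx) as (x' & y & Hx' & [Hy|Hy] & ->);
      destruct (IH x' Hx') as (j & m & Hj & Hm & ->).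
    + exists j, (gmul m y). split; [lia|split; [|gsimpl; reflexivity]].
      rewrite <- Nat.add_1_r. exact (nprod_mul _ _ _ _ _ _ Hm (nprod1 _ _ _ Hy)).
    (* [y = D^-1 (D y)] with [D y] simple, and [D^-1] moves to the left past [m] by conjugation. *)
    + exists (S j), (gmul (gconj (ginv D) m) (gmul D y)).
      split; [lia|split; [|rewrite zpow_opp_succr; gsimpl; reflexivity]].
      rewrite <- Nat.add_1_r.
      apply nprod_mul; [exact (nprod_conj _ _ _ _ _ _ simple_conjVD Hm)|].
      apply nprod1. rewrite <- (ginvK _ y). exact (simple_rdual _ Hy).
Qed.

Lemma nprod_simple_zpow_opp n m : nprod G simple n m ->
  nprod G (fun y => simple (ginv y)) n (gmul (zpow D (- Z.of_nat n)) m).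
Proof.
  revert m. induction n as [|n IH]; intros m Hm.
  - rewrite (nprod0E _ _ _ Hm). simpl. rewrite gmul1l. apply nprod0.
  - destruct (nprod_rconsE _ _ _ _ Hm) as (x & s & Hx & Hs & ->).
    replace (gmul (zpow D (- Z.of_nat (S n))) (gmul x s))
      with (gmul (gconj D (gmul (zpow D (- Z.of_nat n)) x)) (gmul (ginv D) s))
      by (rewrite zpow_opp_succl; gsimpl; reflexivity).
    rewrite <- Nat.add_1_r. apply nprod_mul.
    + refine (nprod_conj _ _ _ _ _ _ _ (IH x Hx)). intros y Hy.
      replace (ginv (gconj D y)) with (gconj D (ginv y)) by (gsimpl; reflexivity).
      exact (simple_conjD _ Hy).
    + apply nprod1. gsimpl. exact (simple_ldual s Hs).
Qed.

Lemma word_nprod_signed l : is_word G (gensS M D) l ->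
  nprod G signed_simple (length l) (gprod G l).
Proof.
  intros Hl. exists l. repeat split. intros y Hy.
  destruct (Hl y Hy) as [[Hs _]|[Hs _]]; [left|right]; exact Hs.
Qed.

Lemma nprod_signed_word n x : nprod G signed_simple n x ->
  exists l, is_word G (gensS M D) l /\ gprod G l = x /\ (length l <= n)%nat.
Proof.
  intros (l0 & <- & Hl0 & <-). induction l0 as [|y l0 IH].
  - exists []. split; [intros y []|split; reflexivity].
  - destruct IH as (l & Hw & Hl & Hlen); [intros z Hz; apply Hl0; right; exact Hz|].
    destruct (classic (y = gone)) as [->|Hy].
    + exists l. simpl. rewrite gmul1l, Hl. split; [exact Hw|split; [reflexivity|lia]].
    + exists (y :: l). simpl. rewrite Hl. split; [|split; [reflexivity|lia]].
      intros z [<-|Hz]; [|exact (Hw z Hz)].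
      destruct (Hl0 y (or_introl eq_refl)) as [Hs|Hs];
        [left; exact (conj Hs Hy)|right; split; [exact Hs|intros Hy1]].
      apply Hy. rewrite <- (ginvK _ y), Hy1. apply ginv1.
Qed.

Lemma unmovable_neq1 a : unmovable M D a -> D <> gone.
Proof. intros [Ha HDa] HD. apply HDa. unfold le_L. rewrite HD, ginv1, gmul1l. exact Ha. Qed.

Section UnmovableElement.
Variable a : G.
Hypothesis a_unmovable : unmovable M D a.
Variable R : nat.
Hypothesis a_nprod : nprod G simple R a.
Hypothesis a_nprod_min : forall N, nprod G simple N a -> (R <= N)%nat.

Let bound (p : Z) : Z := Z.max (Z.max (Z.of_nat R + p) (- p)) (Z.of_nat R).

Lemma signed_length_lower p n : nprod G signed_simple n (gmul (zpow D p) a) ->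
  bound p <= Z.of_nat n.
Proof.
  intros Hn. destruct (nprod_signed_normal _ _ Hn) as (j & m & Hj & Hm & Hpa).
  assert (Ham : a = gmul (zpow D (- (p + Z.of_nat j))) m).
  { rewrite Z.opp_add_distr, zpow_add, (zpow_opp _ _ p), <- gmulA, <- Hpa.
    gsimpl. reflexivity. }
  destruct (Z_lt_le_dec (p + Z.of_nat j) 0) as [Hneg|Hpos].
  - exfalso. apply (proj2 a_unmovable). unfold le_L.
    replace (gmul (ginv D) a)
      with (gmul (zpow D (Z.of_nat (Z.to_nat (- (p + Z.of_nat j) - 1)))) m).
    + exact (Mmul _ _ (zpow_nat_M _) (nprod_simple_M _ _ Hm)).
    + rewrite Ham, <- (zpow_m1 _ D), gmulA, <- zpow_add. f_equal. f_equal. lia.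
  - set (E := Z.to_nat (p + Z.of_nat j)).
    replace (- (p + Z.of_nat j)) with (- Z.of_nat E) in Ham by lia.
    destruct (nprod_simple_ldiv_zpow E (unmovable_neq1 a a_unmovable) n m Hm) as [HE Hrest].
    { rewrite <- Ham. exact (proj1 a_unmovable). }
    rewrite <- Ham in Hrest. apply a_nprod_min in Hrest. unfold bound. lia.
Qed.

Lemma signed_length_upper p :
  nprod G signed_simple (Z.to_nat (bound p)) (gmul (zpow D p) a).
Proof.
  assert (HDpos : forall k, nprod G signed_simple k (zpow D (Z.of_nat k))).
  { intros k. rewrite zpow_nat. apply nprod_repeat. left. exact simpleD. }
  assert (HDneg : forall k, nprod G signed_simple k (zpow D (- Z.of_nat k))).
  { intros k. rewrite zpow_opp_nat. apply nprod_repeat. right. rewrite ginvK. exact simpleD. }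
  assert (Hsigned : forall k m, nprod G simple k m -> nprod G signed_simple k m).
  { intros k m. apply nprod_weaken. intros y Hy. left. exact Hy. }
  assert (Hneg : forall k m, nprod G simple k m ->
    nprod G signed_simple k (gmul (zpow D (- Z.of_nat k)) m)).
  { intros k m Hm. refine (nprod_weaken _ _ _ _ _ _ (nprod_simple_zpow_opp k m Hm)).
    intros y Hy. right. exact Hy. }
  unfold bound. destruct (Z_le_gt_dec 0 p) as [Hp|Hp].
  - set (k := Z.to_nat p). replace p with (Z.of_nat k) by lia.
    replace (Z.to_nat _) with (k + R)%nat by lia.
    exact (nprod_mul _ _ _ _ _ _ (HDpos k) (Hsigned _ _ a_nprod)).
  - destruct (Z_le_gt_dec p (- Z.of_nat R)) as [HpR|HpR].
    + set (k := Z.to_nat (- p - Z.of_nat R)).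
      replace (zpow D p) with (gmul (zpow D (- Z.of_nat k)) (zpow D (- Z.of_nat R)))
        by (rewrite <- zpow_add; f_equal; lia).
      replace (Z.to_nat _) with (k + R)%nat by lia.
      rewrite <- gmulA. exact (nprod_mul _ _ _ _ _ _ (HDneg k) (Hneg _ _ a_nprod)).
    + set (q := Z.to_nat (- p)).
      destruct (nprod_split _ _ q R a ltac:(lia) a_nprod) as (a1 & a2 & Ha1 & Ha2 & ->).
      replace p with (- Z.of_nat q) by lia.
      replace (Z.to_nat _) with (q + (R - q))%nat by lia.
      rewrite gmulA. exact (nprod_mul _ _ _ _ _ _ (Hneg _ _ Ha1) (Hsigned _ _ Ha2)).
Qed.

Lemma word_length_zpow_mul p :
  Z.of_nat (word_length (gensS M D) (gmul (zpow D p) a)) = bound p.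
Proof.
  assert (Hlower : forall l, is_word G (gensS M D) l -> gprod G l = gmul (zpow D p) a ->
    bound p <= Z.of_nat (length l)).
  { intros l Hl Hla. apply signed_length_lower. rewrite <- Hla. exact (word_nprod_signed l Hl). }
  destruct (nprod_signed_word _ _ (signed_length_upper p)) as (l & Hl & Hla & Hlen).
  pose proof (Hlower l Hl Hla). unfold bound in *.
  rewrite (word_length_eq _ _ _ (length l)); [lia|].
  split; [exists l; auto|].
  intros l' Hl' Hl'a. pose proof (Hlower l' Hl' Hl'a). lia.
Qed.

End UnmovableElement.

End Garside.

Theorem corollary2p4 (G : Group) (M : G -> Prop) (Delta : G)
  (HG : garside_structure M Delta)
  (alpha : G) (p : Z) (a : G)
  (Ha : unmovable M Delta a) (Hform : alpha = gmul (zpow Delta p) a) :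
  let lg := word_length (gensS M Delta) in
  (0 <= p -> Z.of_nat (lg alpha) = Z.of_nat (lg a) + p) /\
  (p <= - Z.of_nat (lg a) -> Z.of_nat (lg alpha) = - p) /\
  (- Z.of_nat (lg a) <= p <= 0 -> Z.of_nat (lg alpha) = Z.of_nat (lg a)) /\
  Z.of_nat (lg alpha) = Z.max (Z.max (Z.of_nat (lg a) + p) (- p)) (Z.of_nat (lg a)).
Proof.
  destruct HG as ([M1 Mmul] & M_pointed & D_balanced & _ & _ & generates & _ & L_lattice).
  destruct (dec_inh_nat_subset_has_unique_least_element (fun N => nprod G (Div G M Delta) N a))
    as (R & [HR Hmin] & _).
  { intros N. apply classic. }
  { destruct (proj1 (generates a) (proj1 Ha)) as (l & Hl & Hla). exists (length l), l. auto. }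
  pose proof (word_length_zpow_mul G M Delta M1 Mmul M_pointed D_balanced L_lattice a Ha R HR Hmin)
    as Hlg.
  assert (Hlga : Z.of_nat (word_length (gensS M Delta) a) = Z.of_nat R).
  { rewrite <- (gmul1l G a). change (@gone G) with (zpow Delta 0). rewrite Hlg. lia. }
  intros lg. unfold lg. rewrite Hform, Hlg, Hlga. lia.
Qed.
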